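(* Let $m\ge 2$ and let $A=(a_{ij})_{i,j=1}^m$ and $B=(b_{ij})_{i,j=1}^m$ be real matrices with $0\le a_{ij},b_{ij}\le 1$ for all $i,j$. Assume $\det(A)=\det(B)=0$ and $AB^T=\mathbf{1}$, where $\mathbf{1}$ is the $m\times m$ matrix all of whose entries are $1$, and assume that neither $A$ nor $B$ has all of its rows identical. Let $V:S^{m-1}\to S^{m-1}$ be the operator $$(V(x))_k=\Big(\sum_{i=1}^m a_{ik}x_i\Big)\Big(\sum_{j=1}^m b_{jk}x_j\Big),\qquad k=1,\dots,m.$$ Let $c=(c_1,\dots,c_m)^T\in\mathbb{R}^m$ satisfy $c_i\ge 0$ for all $i$, and suppose that either $Ac\le c$ or $Bc\le c$ (componentwise inequality). Then the function $\psi_c:S^{m-1}\to\mathbb{R}$, $\psi_c(x)=\sum_{k=1}^m c_kx_k$, is a Lyapunov function for $V$, i.e. for every $x^{(0)}\in S^{m-1}$ the limit $\lim_{n\to\infty}\psi_c(x^{(n)})$ exists, where $x^{(n+1)}=V(x^{(n)})$.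
   Context: $S^{m-1}=\{x\in\mathbb{R}^m: x_i\ge 0,\ \sum_{i=1}^m x_i=1\}$ is the standard simplex. The conditions on $A,B$ ensure that $P_{ij,k}=a_{ik}b_{jk}$ satisfies $P_{ij,k}\ge 0$ and $\sum_k P_{ij,k}=1$, so $V(x)_k=\sum_{i,j}P_{ij,k}x_ix_j$ is a quadratic stochastic operator mapping $S^{m-1}$ to itself (a ''separable'' quadratic stochastic operator). A continuous function $\phi:S^{m-1}\to\mathbb{R}$ is called a Lyapunov function for $V$ if $\lim_{n\to\infty}\phi(x^{(n)})$ exists for every initial point $x^{(0)}\in S^{m-1}$, where $x^{(n+1)}=V(x^{(n)})$. *)

From HB Require Import structures.
From mathcomp Require Import all_boot all_order all_algebra.
From mathcomp Require Import all_classical all_reals topology normedtype sequences.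
Set Implicit Arguments. Unset Strict Implicit. Unset Printing Implicit Defensive.
Import Order.TTheory GRing.Theory Num.Theory numFieldNormedType.Exports.
Local Open Scope classical_set_scope.
Local Open Scope ring_scope.

Section Defs.
Variable R : realType.

Definition in_simplex (m : nat) (x : 'I_m -> R) : Prop :=
  (forall i, 0 <= x i) /\ \sum_(i < m) x i = 1.

Definition sep_qso (m : nat) (A B : 'M[R]_m) (x : 'I_m -> R) : 'I_m -> R :=
  fun k => (\sum_(i < m) A i k * x i) * (\sum_(j < m) B j k * x j).

Definition psi (m : nat) (c : 'I_m -> R) (x : 'I_m -> R) : R :=
  \sum_(k < m) c k * x k.

Definition lyapunov_for (m : nat) (V : ('I_m -> R) -> ('I_m -> R))
    (phi : ('I_m -> R) -> R) : Prop :=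
  forall x0 : 'I_m -> R, in_simplex x0 ->
    cvg ((fun n : nat => phi (iter n V x0)) @ \oo).

Definition rows_identical (m : nat) (A : 'M[R]_m) : Prop :=
  forall i j : 'I_m, row i A = row j A.
End Defs.

From HB Require Import structures.
From mathcomp Require Import all_boot all_order all_algebra.
From mathcomp Require Import all_classical all_reals topology normedtype sequences.
From mathcomp Require Import ring.
Import Order.TTheory GRing.Theory Num.Theory numFieldNormedType.Exports.
Local Open Scope ring_scope.

(* V preserves the simplex, and since one factor of V(x)_k is a convex
   combination of entries in [0, 1], psi_c(V x) <= sum_k c_k (A^T x)_k
   = sum_i x_i (A c)_i <= psi_c(x) when A c <= c (symmetrically for B).
   So psi_c is nonincreasing and nonnegative along every trajectory, hence
   convergent. *)

Section SeparableQSO.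
Variables (R : realType) (m : nat).
Implicit Types (A B P Q : 'M[R]_m) (c x : 'I_m -> R).

Lemma sep_qsoC A B : sep_qso A B = sep_qso B A.
Proof. by apply/funext => x; apply/funext => k; rewrite /sep_qso mulrC. Qed.

Lemma sep_qso_sum A B x :
  \sum_(k < m) sep_qso A B x k =
  \sum_(i < m) \sum_(j < m) x i * x j * (A *m B^T) i j.
Proof.
rewrite /sep_qso; under eq_bigr => k _ do rewrite mulr_suml.
rewrite exchange_big /=; apply: eq_bigr => i _.
under eq_bigr => k _ do rewrite mulr_sumr.
rewrite exchange_big /=; apply: eq_bigr => j _.
rewrite !mxE mulr_sumr; apply: eq_bigr => k _; rewrite !mxE; ring.
Qed.

Lemma sep_qso_simplex A B x :
  (forall i j, 0 <= A i j) -> (forall i j, 0 <= B i j) ->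
  A *m B^T = const_mx 1 -> in_simplex x -> in_simplex (sep_qso A B x).
Proof.
move=> A_ge0 B_ge0 AB1 [x_ge0 x_sum1]; split.
  by move=> k; apply: mulr_ge0; apply: sumr_ge0 => i _; apply: mulr_ge0.
rewrite sep_qso_sum AB1.
under eq_bigr => i _ do under eq_bigr => j _ do rewrite mxE mulr1.
by under eq_bigr => i _ do rewrite -mulr_sumr x_sum1 mulr1.
Qed.

Lemma psi_ge0 c x : (forall i, 0 <= c i) -> in_simplex x -> 0 <= psi c x.
Proof. by move=> c_ge0 [x_ge0 _]; apply: sumr_ge0 => k _; apply: mulr_ge0. Qed.

Lemma simplex_comb_le1 (w : 'I_m -> R) x :
  (forall j, w j <= 1) -> in_simplex x -> \sum_(j < m) w j * x j <= 1.
Proof.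
move=> w_le1 [x_ge0 x_sum1]; rewrite -x_sum1; apply: ler_sum => j _.
by rewrite ler_piMl.
Qed.

Lemma psi_sep_qso_le P Q c x :
  (forall i j, 0 <= P i j) -> (forall i j, Q i j <= 1) ->
  (forall i, 0 <= c i) -> (forall i, \sum_(j < m) P i j * c j <= c i) ->
  in_simplex x -> psi c (sep_qso P Q x) <= psi c x.
Proof.
move=> P_ge0 Q_le1 c_ge0 Pc_le hx; have [x_ge0 _] := hx.
have Px_ge0 k : 0 <= \sum_(i < m) P i k * x i.
  by apply: sumr_ge0 => i _; apply: mulr_ge0.
apply: (@le_trans _ _ (\sum_(k < m) c k * \sum_(i < m) P i k * x i)).
  apply: ler_sum => k _; apply: ler_wpM2l => //.
  by rewrite ler_piMr // simplex_comb_le1.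
under eq_bigr => k _ do rewrite mulr_sumr.
rewrite exchange_big /=; apply: ler_sum => i _.
rewrite (mulrC (c i)); apply: le_trans (ler_wpM2l (x_ge0 i) (Pc_le i)).
by rewrite mulr_sumr le_eqVlt; apply/orP; left; apply/eqP/eq_bigr => k _; ring.
Qed.

End SeparableQSO.

Lemma lyapunov_for_nonincreasing (R : realType) (m : nat)
    (V : ('I_m -> R) -> 'I_m -> R) (phi : ('I_m -> R) -> R) :
  (forall x, in_simplex x -> in_simplex (V x)) ->
  (forall x, in_simplex x -> phi (V x) <= phi x) ->
  (forall x, in_simplex x -> 0 <= phi x) ->
  lyapunov_for V phi.
Proof.
move=> V_simplex phi_dec phi_ge0 x0 hx0.
have traj_simplex n : in_simplex (iter n V x0).
  by elim: n => [|n IH] //=; apply: V_simplex.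
have phi_traj_dec : nonincreasing_seq (fun n => phi (iter n V x0)).
  by apply/nonincreasing_seqP => n; rewrite iterS; apply: phi_dec.
have phi_traj_lb : has_lbound (range (fun n => phi (iter n V x0))).
  by exists 0 => _ [n _ <-]; apply: phi_ge0.
have := nonincreasing_cvgn phi_traj_dec phi_traj_lb; exact: cvgP.
Qed.

Theorem theorem3p1 (R : realType) (m : nat) (A B : 'M[R]_m) (c : 'I_m -> R) :
  (2 <= m)%N ->
  (forall i j, 0 <= A i j <= 1) ->
  (forall i j, 0 <= B i j <= 1) ->
  \det A = 0 -> \det B = 0 ->
  A *m B^T = const_mx 1 ->
  ~ rows_identical A -> ~ rows_identical B ->
  (forall i, 0 <= c i) ->
  ((forall i, \sum_(j < m) A i j * c j <= c i) \/
   (forall i, \sum_(j < m) B i j * c j <= c i)) ->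
  lyapunov_for (sep_qso A B) (psi c).
Proof.
move=> _ hA hB _ _ AB1 _ _ c_ge0 hc.
have [A_ge0 A_le1] : (forall i j, 0 <= A i j) /\ (forall i j, A i j <= 1).
  by split=> i j; case/andP: (hA i j).
have [B_ge0 B_le1] : (forall i j, 0 <= B i j) /\ (forall i j, B i j <= 1).
  by split=> i j; case/andP: (hB i j).
apply: lyapunov_for_nonincreasing.
- by move=> x; apply: sep_qso_simplex.
- move=> x hx; case: hc => [Ac_le | Bc_le]; first exact: psi_sep_qso_le.
  by rewrite sep_qsoC; apply: psi_sep_qso_le.
- by move=> x; apply: psi_ge0.
Qed.
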